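(* Let $f(\cdot;\theta):\mathbb{R}^d\to\mathbb{R}$ be a model with parameters $\theta\in\mathbb{R}^p$, let $x_1,\dots,x_n\in\mathbb{R}^d$ be training inputs with labels $y_i$, and let $\theta^*$ be a global minimum of the empirical risk with zero loss, i.e. $f(x_i;\theta^* )=y_i$ for all $i\in[n]$, at which $f(x_i;\cdot)$ is differentiable for every $i$. Fix a learning rate $\eta>0$. If $\theta^*$ is linearly stable for SGD with learning rate $\eta$, then $$\operatorname{tr}(G(\theta^* ))\le \frac{2}{\eta}.$$
   Context: The empirical Fisher matrix is $G(\theta)=\frac1n\sum_{i=1}^n \nabla_\theta f(x_i;\theta)\nabla_\theta f(x_i;\theta)^T$. Linearized SGD (batch size 1) at $\theta^*$ is the random recursion $\delta_{t+1}=\delta_t-\eta\,\nabla_\theta f(x_{i_t};\theta^* )\nabla_\theta f(x_{i_t};\theta^* )^T\delta_t$, where $i_0,i_1,\dots$ are i.i.d. uniform on $[n]=\{1,\dots,n\}$ and independent of $\delta_0$. The global minimum $\theta^*$ is called linearly stable (for SGD with learning rate $\eta$) if for every distribution of the initial deviation $\delta_0\in\mathbb{R}^p$ (with finite second moment) and every $t\in\mathbb{N}$, the solution of this recursion satisfies $\|\mathbb{E}[\delta_t\delta_t^T]\|_F\le\|\mathbb{E}[\delta_0\delta_0^T]\|_F$. *)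

From HB Require Import structures.
From mathcomp Require Import all_boot all_order all_algebra.
From mathcomp Require Import all_classical all_reals all_analysis.
Set Implicit Arguments. Unset Strict Implicit. Unset Printing Implicit Defensive.
Import Order.TTheory GRing.Theory Num.Theory.
Import numFieldNormedType.Exports.
Local Open Scope ring_scope.

Definition grad {R : realType} {p : nat} (h : 'rV[R]_p -> R) (theta : 'rV[R]_p)
  : 'cV[R]_p := \col_j ('d h theta (delta_mx 0 j)).

Definition emp_fisher {R : realType} {n p : nat} (g : 'I_n -> 'cV[R]_p) : 'M[R]_p :=
  n%:R^-1 *: \sum_(i < n) (g i *m (g i)^T).

Definition frob {R : realType} {p : nat} (M : 'M[R]_p) : R :=
  Num.sqrt (\sum_(j < p) \sum_(k < p) M j k ^+ 2).

Definition sgd_step {R : realType} {n p : nat} (eta : R) (g : 'I_n -> 'cV[R]_p)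
  (v : 'cV[R]_p) (i : 'I_n) : 'cV[R]_p :=
  v - eta *: (g i *m (g i)^T *m v).

(* delta_t as a function of delta_0 and the realized indices i_0,...,i_{t-1}
   (i_0 applied first). *)
Definition sgd_traj {R : realType} {n p t : nat} (eta : R) (g : 'I_n -> 'cV[R]_p)
  (s : t.-tuple 'I_n) (v : 'cV[R]_p) : 'cV[R]_p :=
  foldl (sgd_step eta g) v s.

(* E[delta_t delta_t^T] where delta_0 = d0 is a random vector on the
   probability space (Omega, P) and i_0,...,i_{t-1} are i.i.d. uniform on
   'I_n and independent of delta_0: by independence the joint law is the
   product of the law of delta_0 and the uniform law on 'I_n^t, so the
   expectation is the P-expectation of the uniform average over index
   tuples. *)
Definition second_moment_t {R : realType} {dO} {Omega : measurableType dO}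
  (P : probability Omega R) {n p : nat} (eta : R) (g : 'I_n -> 'cV[R]_p)
  (d0 : Omega -> 'cV[R]_p) (t : nat) : 'M[R]_p :=
  \matrix_(j, k) fine ('E_P[ (fun w =>
      (n%:R ^+ t)^-1 * \sum_(s : t.-tuple 'I_n)
         (sgd_traj eta g s (d0 w) j 0 * sgd_traj eta g s (d0 w) k 0))%R ])%E.

Definition finite_second_moment {R : realType} {dO} {Omega : measurableType dO}
  (P : probability Omega R) {p : nat} (d0 : Omega -> 'cV[R]_p) : Prop :=
  (forall j, measurable_fun setT (fun w => d0 w j 0)) /\
  (forall j, P.-integrable setT (fun w => ((d0 w j 0) ^+ 2)%:E)).

(* Linear stability of theta_star for SGD with learning rate eta, where
   g i = grad_theta f(x_i; theta_star): for every distribution of delta_0 with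
   finite second moment (realized on an arbitrary probability space) and
   every t, ||E[delta_t delta_t^T]||_F <= ||E[delta_0 delta_0^T]||_F. *)
Definition linearly_stable {R : realType} {n p : nat} (eta : R)
  (g : 'I_n -> 'cV[R]_p) : Prop :=
  forall (dO : measure_display) (Omega : measurableType dO)
         (P : probability Omega R) (d0 : Omega -> 'cV[R]_p),
    finite_second_moment P d0 ->
    forall t : nat,
      frob (second_moment_t P eta g d0 t) <= frob (second_moment_t P eta g d0 0).

(* Averaging over the sample, E[delta_(t+1) delta_(t+1)^T] = T E[delta_t delta_t^T]
   for the linear map T X = 1/n sum_i B_i X B_i, B_i = I - eta g_i g_i^T, which is
   self-adjoint for the Frobenius inner product <X, Y> = tr (X^T Y).
   Stability for the deterministic initial deviations delta_0 = e_j bounds the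
   T-orbit of every e_j e_j^T, hence of I.  For self-adjoint T the sequence
   u_k = |T^k I|^2 is log-convex, since u_(k+1) = <T^k I, T^(k+2) I>, and a
   bounded positive log-convex sequence satisfies u_1 <= u_0; therefore
   tr (T I) = <I, T I> <= |I|^2 = p.  Expanding,
   tr (T I) = p - 1 + mean_i (1 - eta a_i)^2 with a_i = |g_i|^2 = tr (g_i g_i^T),
   and mean_i (1 - eta a_i)^2 <= 1 together with (sum a_i)^2 <= n sum a_i^2
   yields tr G = mean_i a_i <= 2 / eta. *)

From HB Require Import structures.
From mathcomp Require Import all_boot all_order all_algebra.
From mathcomp Require Import all_classical all_reals all_analysis.
From mathcomp Require Import ring lra.
Set Implicit Arguments. Unset Strict Implicit. Unset Printing Implicit Defensive.
Import Order.TTheory GRing.Theory Num.Theory.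
Import numFieldNormedType.Exports.
Local Open Scope ring_scope.

Section IterLinear.
Variables (R : pzRingType) (V : lmodType R) (f : {linear V -> V}).

Lemma iter_is_linear k : linear (iter k f).
Proof. by elim: k => [//|k IH] a u v /=; rewrite IH linearP. Qed.

HB.instance Definition _ k :=
  GRing.isLinear.Build R V V *:%R (iter k f) (iter_is_linear k).

End IterLinear.

Section FrobeniusDot.
Variables (R : realDomainType) (m n : nat).
Implicit Types X Y : 'M[R]_(m, n).

Definition frob_dot X Y : R := \tr (X^T *m Y).

Lemma frob_dot_is_linear X : scalar (frob_dot X).
Proof. by move=> a Y Z; rewrite /frob_dot linearP mxtraceD mxtraceZ. Qed.

HB.instance Definition _ X :=
  GRing.isLinear.Build R 'M[R]_(m, n) R *%R (frob_dot X) (frob_dot_is_linear X).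

Lemma frob_dotC X Y : frob_dot X Y = frob_dot Y X.
Proof. by rewrite /frob_dot -mxtrace_tr trmx_mul trmxK. Qed.

Lemma frob_dotE X Y : frob_dot X Y = \sum_i \sum_j X i j * Y i j.
Proof.
rewrite /frob_dot /mxtrace exchange_big; apply: eq_bigr => j _.
by rewrite mxE; apply: eq_bigr => i _; rewrite mxE.
Qed.

Lemma frob_dot_sqrE X : frob_dot X X = \sum_i \sum_j X i j ^+ 2.
Proof. by rewrite frob_dotE; apply: eq_bigr => i _; apply: eq_bigr => j _; rewrite expr2. Qed.

Lemma frob_dot_ge0 X : 0 <= frob_dot X X.
Proof.
by rewrite frob_dot_sqrE !sumr_ge0 // => i _; rewrite sumr_ge0 // => j _; rewrite sqr_ge0.
Qed.

Lemma frob_dot_eq0 X : (frob_dot X X == 0) = (X == 0).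
Proof.
apply/eqP/eqP => [|->]; last by rewrite linear0.
rewrite frob_dot_sqrE => /eqP; rewrite psumr_eq0 => [/allP X0|i _]; last first.
  by rewrite sumr_ge0 // => j _; rewrite sqr_ge0.
apply/matrixP => i j; rewrite mxE; apply/eqP.
move: (X0 i (mem_index_enum _)) => /implyP /(_ isT).
rewrite psumr_eq0 => [/allP/(_ j (mem_index_enum _))|k _]; last by rewrite sqr_ge0.
by rewrite sqrf_eq0.
Qed.

Lemma frob_dot_sqr_comb X Y (a b : R) :
  frob_dot (a *: X + b *: Y) (a *: X + b *: Y) =
    a ^+ 2 * frob_dot X X + 2 * a * b * frob_dot X Y + b ^+ 2 * frob_dot Y Y.
Proof.
rewrite (linearD (frob_dot _)) !linearZ /= !(frob_dotC (_ + _)).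
by rewrite !(linearD (frob_dot _)) !linearZ /= (frob_dotC Y X); ring.
Qed.

Lemma frob_dot_CauchySchwarz X Y : frob_dot X Y ^+ 2 <= frob_dot X X * frob_dot Y Y.
Proof.
have [->|Y0] := eqVneq Y 0; first by rewrite linear0 expr0n /= mulr_ge0 ?frob_dot_ge0.
have a_gt0 : 0 < frob_dot Y Y by rewrite lt0r frob_dot_eq0 Y0 frob_dot_ge0.
have := frob_dot_ge0 (frob_dot Y Y *: X + (- frob_dot X Y) *: Y).
rewrite frob_dot_sqr_comb.
set a := frob_dot Y Y; set b := frob_dot X Y; set c := frob_dot X X.
have -> : a ^+ 2 * c + 2 * a * - b * b + (- b) ^+ 2 * a = a * (c * a - b ^+ 2) by ring.
by rewrite pmulr_rge0 // subr_ge0.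
Qed.

End FrobeniusDot.

Lemma frob_dot1l (R : realDomainType) n (Y : 'M[R]_n) : frob_dot 1%:M Y = \tr Y.
Proof. by rewrite /frob_dot tr_scalar_mx mul1mx. Qed.

Section Frobenius.
Variables (R : realType) (p : nat).
Implicit Types X Y : 'M[R]_p.

Lemma frobE X : frob X = Num.sqrt (frob_dot X X).
Proof. by rewrite frob_dot_sqrE. Qed.

Lemma frob_ge0 X : 0 <= frob X.
Proof. exact: sqrtr_ge0. Qed.

Lemma sqr_frob X : frob X ^+ 2 = frob_dot X X.
Proof. by rewrite frobE sqr_sqrtr ?frob_dot_ge0. Qed.

Lemma frob_dot_le_frob X Y : frob_dot X Y <= frob X * frob Y.
Proof.
rewrite !frobE -sqrtrM ?frob_dot_ge0 //; apply: le_trans (ler_norm _) _.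
by rewrite -sqrtr_sqr; apply/ler_wsqrtr/frob_dot_CauchySchwarz.
Qed.

Lemma ler_frobD X Y : frob (X + Y) <= frob X + frob Y.
Proof.
rewrite -[leRHS]ger0_norm ?addr_ge0 ?frob_ge0 // -sqrtr_sqr frobE ler_wsqrtr //.
have := frob_dot_sqr_comb X Y 1 1; rewrite !scale1r => ->.
rewrite sqrrD !sqr_frob !expr1n !mul1r !mulr1; have := frob_dot_le_frob X Y; lra.
Qed.

Lemma ler_frob_sum (I : Type) (r : seq I) (P : pred I) (F : I -> 'M[R]_p) :
  frob (\sum_(i <- r | P i) F i) <= \sum_(i <- r | P i) frob (F i).
Proof.
apply: (big_ind2 (fun X a => frob X <= a)) => // [|X a Y b HX HY].
  by rewrite frobE linear0 sqrtr0.
by apply: le_trans (ler_frobD X Y) _; apply: lerD.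
Qed.

End Frobenius.

Lemma bounded_log_convex_le (R : archiRealFieldType) (u : nat -> R) (K : R) :
  0 < u 0 -> (forall k, u k <= K) -> (forall k, u k.+1 ^+ 2 <= u k * u k.+2) ->
  u 1 <= u 0.
Proof.
move=> u0_gt0 u_le u_lc; rewrite leNgt; apply/negP => u01.
(* Log-convexity keeps every increment at least [u 1 - u 0]: linear growth. *)
pose e := u 1 - u 0; have e_gt0 : 0 < e by rewrite subr_gt0.
have incr k : 0 < u k /\ e <= u k.+1 - u k.
  elim: k => [|k [uk_gt0 IH]]; first by [].
  have uk1_gt0 : 0 < u k.+1 by lra.
  split=> //; suff : 0 <= u k * (u k.+2 - u k.+1 - e) by rewrite pmulr_rge0 // subr_ge0.
  have := u_lc k; nra.
have lin k : u 0 + k%:R * e <= u k.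
  elim: k => [|k IH]; first by rewrite mul0r addr0.
  by have [_] := incr k; rewrite mulrSr mulrDl mul1r; lra.
have K_ge0 : 0 <= K / e by rewrite divr_ge0 //; have := u_le 0; lra.
have := archi_boundP K_ge0; rewrite ltr_pdivrMr // => KN.
by have := lin (Num.bound (K / e)); have := u_le (Num.bound (K / e)); lra.
Qed.

Section SelfAdjointOrbit.
Variables (R : realType) (p : nat) (T : {linear 'M[R]_p -> 'M[R]_p}).
Hypothesis T_sym : forall X Y, frob_dot X (T Y) = frob_dot (T X) Y.

Lemma bounded_orbit_dot_le X K :
  (forall k, frob (iter k T X) <= K) -> frob_dot X (T X) <= frob_dot X X.
Proof.
move=> bounded; have [->|X0] := eqVneq X 0; first by rewrite !linear0.
pose u k := frob_dot (iter k T X) (iter k T X).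
have u_lc k : u k.+1 ^+ 2 <= u k * u k.+2.
  by rewrite {1}/u -{1}[iter k.+1 T X]/(T (iter k T X)) -T_sym frob_dot_CauchySchwarz.
have u_le k : u k <= K ^+ 2.
  by rewrite /u -sqr_frob; have := bounded k; have := frob_ge0 (iter k T X); nra.
have u0_gt0 : 0 < u 0 by rewrite lt0r frob_dot_eq0 X0 frob_dot_ge0.
have := bounded_log_convex_le u0_gt0 u_le u_lc.
have := frob_dot_CauchySchwarz X (T X); have := frob_dot_ge0 (T X); rewrite /u /=; nra.
Qed.

End SelfAdjointOrbit.

Section CovStep.
Variables (R : realFieldType) (n p : nat) (B : 'I_n -> 'M[R]_p).

Definition cov_step (X : 'M[R]_p) : 'M[R]_p :=
  n%:R^-1 *: \sum_i (B i *m X *m (B i)^T).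

Lemma cov_step_is_linear : linear cov_step.
Proof.
move=> a X Y; rewrite /cov_step scalerA mulrC -scalerA -scalerDr; congr (_ *: _).
rewrite scaler_sumr -big_split; apply: eq_bigr => i _ /=.
by rewrite mulmxDr mulmxDl -scalemxAr -scalemxAl.
Qed.

HB.instance Definition _ :=
  GRing.isLinear.Build R 'M[R]_p 'M[R]_p *:%R cov_step cov_step_is_linear.

Lemma cov_step_sym : (forall i, (B i)^T = B i) ->
  forall X Y, frob_dot X (cov_step Y) = frob_dot (cov_step X) Y.
Proof.
move=> B_sym X Y; rewrite /frob_dot /cov_step linearZ /= [(_ *: _)^T]linearZ /=.
rewrite -scalemxAl !mxtraceZ mulmx_sumr [(\sum_i _)^T]linear_sum mulmx_suml.
rewrite !linear_sum /=.
congr (_ * _); apply: eq_bigr => i _; rewrite !trmx_mul trmxK !B_sym.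
by rewrite -!mulmxA [RHS]mxtrace_mulC !mulmxA.
Qed.

Lemma mxtrace_cov_step1 :
  \tr (cov_step 1%:M) = n%:R^-1 * \sum_i \tr (B i *m (B i)^T).
Proof. by rewrite /cov_step mxtraceZ linear_sum; under eq_bigr do rewrite mulmx1. Qed.

End CovStep.

Lemma sum_tuple_cons (T : finType) (V : nmodType) t (F : t.+1.-tuple T -> V) :
  \sum_(s : t.+1.-tuple T) F s = \sum_x \sum_(s : t.-tuple T) F [tuple of x :: s].
Proof.
rewrite pair_big /= (reindex (fun q : T * t.-tuple T => [tuple of q.1 :: q.2])) //=.
apply: onW_bij; exists (fun s : t.+1.-tuple T => (thead s, [tuple of behead s])).
  by case=> x s /=; rewrite theadE; congr pair; apply: val_inj.
by case/tupleP => x s; apply: val_inj; rewrite /= theadE.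
Qed.

Section LinearizedSGD.
Variables (R : realType) (n p : nat) (eta : R) (g : 'I_n -> 'cV[R]_p).

Definition sgd_factor (v : 'cV[R]_p) : 'M[R]_p := 1%:M - eta *: (v *m v^T).

Local Notation T := (cov_step (fun i => sgd_factor (g i))).

Lemma tr_sgd_factor v : (sgd_factor v)^T = sgd_factor v.
Proof. by rewrite /sgd_factor linearB /= linearZ /= trmx_mul trmxK tr_scalar_mx. Qed.

Lemma sgd_stepE v i : sgd_step eta g v i = sgd_factor (g i) *m v.
Proof. by rewrite /sgd_step /sgd_factor mulmxBl mul1mx -scalemxAl. Qed.

Lemma outer_sqr (v : 'cV[R]_p) :
  (v *m v^T) *m (v *m v^T) = \tr (v *m v^T) *: (v *m v^T).
Proof.
rewrite mulmxA -(mulmxA v) [v^T *m v]mx11_scalar mul_mx_scalar -scalemxAl.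
by rewrite mxtrace_mulC /mxtrace big_ord1.
Qed.

Lemma mxtrace_sgd_factor_sqr v :
  \tr (sgd_factor v *m (sgd_factor v)^T) = p%:R - 1 + (1 - eta * \tr (v *m v^T)) ^+ 2.
Proof.
rewrite tr_sgd_factor /sgd_factor mulmxBl mul1mx mulmxBr mulmx1 -scalemxAl -scalemxAr.
rewrite outer_sqr !scalerA !linearB /= !mxtraceZ mxtrace1; ring.
Qed.

Lemma mxtrace_cov_step_sgd1 : (0 < n)%N ->
  \tr (T 1%:M) = p%:R - 1 + n%:R^-1 * \sum_i (1 - eta * \tr (g i *m (g i)^T)) ^+ 2.
Proof.
move=> n_gt0; rewrite mxtrace_cov_step1; under eq_bigr do rewrite mxtrace_sgd_factor_sqr.
rewrite big_split /= sumr_const card_ord mulrDr -[(_ - 1) *+ n]mulr_natl mulrA.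
by rewrite mulVf ?mul1r // pnatr_eq0 -lt0n.
Qed.

Lemma avg_sgd_traj_outer t v :
  (n%:R ^+ t)^-1 *: \sum_(s : t.-tuple 'I_n) (sgd_traj eta g s v *m (sgd_traj eta g s v)^T)
  = iter t T (v *m v^T).
Proof.
elim: t v => [|t IH] v.
  rewrite expr0 invr1 scale1r (big_pred1 [tuple]) // => s.
  by apply/esym/eqP/val_inj; case: s => -[].
rewrite sum_tuple_cons exprS invfM -scalerA scaler_sumr iterSr.
have traj_cons i (s : t.-tuple 'I_n) :
    sgd_traj eta g [tuple of i :: s] v = sgd_traj eta g s (sgd_factor (g i) *m v).
  by rewrite -sgd_stepE.
under eq_bigr => i _ do under eq_bigr => s _ do rewrite traj_cons.
under eq_bigr => i _ do rewrite IH.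
rewrite -linear_sum -linearZ; congr (iter t T _).
rewrite /cov_step; congr (_ *: _); apply: eq_bigr => i _.
by rewrite trmx_mul tr_sgd_factor !mulmxA.
Qed.

Lemma second_moment_cst (dO : measure_display) (Omega : measurableType dO)
    (P : probability Omega R) t v :
  second_moment_t P eta g (fun=> v) t = iter t T (v *m v^T).
Proof.
rewrite -avg_sgd_traj_outer; apply/matrixP => j k.
rewrite !mxE expectation_cst /= summxE; congr (_ * _).
by apply: eq_bigr => s _; rewrite !mxE big_ord1 !mxE.
Qed.

Lemma finite_second_moment_cst (dO : measure_display) (Omega : measurableType dO)
    (P : probability Omega R) (v : 'cV[R]_p) :
  finite_second_moment P (fun=> v).
Proof.
split=> j; first exact: measurable_cst.
exact: finite_measure_integrable_cst.
Qed.

Lemma linearly_stable_outer_orbit : linearly_stable eta g ->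
  forall v : 'cV[R]_p, forall k, frob (iter k T (v *m v^T)) <= frob (v *m v^T).
Proof.
move=> stable v k.
have := stable _ _ (\d_(0 : R) : probability R R) _ (finite_second_moment_cst _ v) k.
by rewrite !second_moment_cst.
Qed.

End LinearizedSGD.

Lemma sqr_sumr_le (R : realDomainType) n (a : 'I_n -> R) :
  (\sum_i a i) ^+ 2 <= n%:R * \sum_i a i ^+ 2.
Proof.
have := frob_dot_CauchySchwarz (const_mx 1 : 'cV[R]_n) (\col_i a i); rewrite !frob_dotE.
under eq_bigr do rewrite big_ord1 !mxE mul1r.
under [X in _ <= X * _]eq_bigr do rewrite big_ord1 !mxE mul1r.
under [X in _ <= _ * X]eq_bigr do rewrite big_ord1 !mxE -expr2.
by rewrite sumr_const card_ord.
Qed.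

Lemma mean_le_of_mean_sqr_le1 (R : realFieldType) n (a : 'I_n -> R) (eta : R) :
  (0 < n)%N -> 0 < eta ->
  n%:R^-1 * \sum_i (1 - eta * a i) ^+ 2 <= 1 -> n%:R^-1 * \sum_i a i <= 2 / eta.
Proof.
rewrite -(ltr0n R) => n_gt0 eta_gt0.
have jensen := sqr_sumr_le a.
set S1 := \sum_i a i in jensen *; set S2 := \sum_i a i ^+ 2 in jensen.
have -> : \sum_i (1 - eta * a i) ^+ 2 = n%:R - 2 * eta * S1 + eta ^+ 2 * S2.
  transitivity (\sum_i (1 + - (2 * eta) * a i + eta ^+ 2 * a i ^+ 2)).
    by apply: eq_bigr => i _; ring.
  by rewrite /S1 /S2 !big_split /= -!mulr_sumr sumr_const card_ord; ring.
rewrite -(ler_pM2l n_gt0) mulrA mulfV ?gt_eqF // mul1r mulr1 => le_n.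
have le_S2 : eta * S2 <= 2 * S1 by rewrite -(ler_pM2l eta_gt0); lra.
rewrite -(ler_pM2l n_gt0) mulrA mulfV ?gt_eqF // mul1r mulrA ler_pdivlMr //.
have [S1_le0|S1_gt0] := lerP S1 0; first by nra.
by rewrite -(ler_pM2l S1_gt0); nra.
Qed.

Theorem proposition3p2 (R : realType) (d p n : nat) (hn : (0 < n)%N)
  (f : 'rV[R]_d -> 'rV[R]_p -> R) (x : 'I_n -> 'rV[R]_d) (y : 'I_n -> R)
  (theta : 'rV[R]_p)
  (hfit : forall i, f (x i) theta = y i)
  (hdiff : forall i, differentiable (f (x i)) theta)
  (eta : R) (heta : 0 < eta)
  (hstab : linearly_stable eta (fun i => grad (f (x i)) theta)) :
  \tr (emp_fisher (fun i => grad (f (x i)) theta)) <= 2 / eta.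
Proof.
set g := fun i => grad (f (x i)) theta.
set T := cov_step (fun i => sgd_factor eta (g i)).
have T_sym : forall X Y, frob_dot X (T Y) = frob_dot (T X) Y.
  by apply: cov_step_sym => i; apply: tr_sgd_factor.
have orbit_le k : frob (iter k T 1%:M) <= \sum_(j < p) frob (delta_mx j j : 'M[R]_p).
  rewrite mx1_sum_delta linear_sum; apply: le_trans (ler_frob_sum _ _ _) (ler_sum _ _) => j _.
  rewrite -(mul_delta_mx (0 : 'I_1)) -[delta_mx 0 j]trmx_delta.
  exact: linearly_stable_outer_orbit.
have := bounded_orbit_dot_le T_sym orbit_le.
rewrite !frob_dot1l mxtrace1 mxtrace_cov_step_sgd1 // => trT1_le.
rewrite /emp_fisher mxtraceZ linear_sum /=.
by apply: mean_le_of_mean_sqr_le1 => //; lra.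
Qed.
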